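(* Let $R\in\mathbb{Z}[x]$ be a nonzero polynomial with $R=\prod_{i=1}^{\deg R} r_i^{\,i}$, where $r_i\in\mathbb{Z}[x]$ are square-free and pairwise coprime. Let $I=(a,b)\subset\mathbb{R}$ be an interval containing a root $\alpha$ of $r_{i_0}$, and put $m_I=(a+b)/2$, $r_I=(b-a)/2$. If $T^{(r_{i_0})'}_{3/2}(m_I,8r_I)$ holds and $T^{r_i}_1(m_I,8r_I)$ holds for all $i\neq i_0$, then the disc $\Delta_{2r_I}(m_I)=\{z\in\mathbb{C}:|z-m_I|<2r_I\}$ contains $\alpha$ and no other complex root of $R$, and for every $z\in\mathbb{C}$ with $|z-m_I|=2r_I$, $$|R(z)|>2^{-i_0-\deg R}\,|R(m_I-2r_I)|.$$
   Context: For $p\in\mathbb{R}[x]$ and reals $m,r,K$, the predicate $T^p_K(m,r)$ means $|p(m)|-K\sum_{k\ge1}\left|\frac{p^{(k)}(m)}{k!}\right|r^k>0$, where $p^{(k)}$ is the $k$-th derivative of $p$. *)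

From HB Require Import structures.
From mathcomp Require Import all_boot all_order all_algebra.
From mathcomp Require Import reals.
From mathcomp.real_closed Require Import complex.
Set Implicit Arguments. Unset Strict Implicit. Unset Printing Implicit Defensive.
Import Order.TTheory GRing.Theory Num.Theory.
Local Open Scope ring_scope.

(* Divisibility in the ring Z[x] (exact, not pseudo-division). *)
Definition zdvdp (q p : {poly int}) : Prop := exists s : {poly int}, p = s * q.

Definition zsquarefree (p : {poly int}) : Prop :=
  forall q : {poly int}, zdvdp (q * q) p -> q \is a GRing.unit.

Definition zcoprime (p1 p2 : {poly int}) : Prop :=
  forall q : {poly int}, zdvdp q p1 -> zdvdp q p2 -> q \is a GRing.unit.

Definition polyRi (R : realType) (p : {poly int}) : {poly R} :=
  map_poly (fun z : int => z%:~R) p.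

Definition polyCi (R : realType) (p : {poly int}) : {poly R[i]} :=
  map_poly (fun z : int => z%:~R) p.

(* The predicate T^p_K(m,r):
   |p(m)| - K * sum_{k>=1} |p^(k)(m)/k!| r^k > 0
   (the sum is finite: p^(k) = 0 for k >= size p). *)
Definition Tpred (R : realType) (p : {poly R}) (K m r : R) : Prop :=
  0 < `|p.[m]| - K * \sum_(1 <= k < size p) `|(p^`(k)).[m] / (k`!)%:R| * r ^+ k.

From HB Require Import structures.
From mathcomp Require Import all_boot all_order all_algebra.
From mathcomp Require Import reals.
From mathcomp.real_closed Require Import complex.
From mathcomp Require Import ring lra.
From mathcomp.real_closed Require polyorder.
Import Order.TTheory GRing.Theory Num.Theory.
Local Open Scope ring_scope.

(* Expand each factor in Taylor series at m.  Every term of the Taylor tail grows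
   at least linearly with the radius, so the tail at radius 2r is at most a quarter
   of the tail at radius 8r, which T controls.  Hence a factor p with T^p_1 stays within
   |p(m)|/4 of p(m) on the closed disc of radius 2r: it has no root there, and
   its moduli at two points of the disc differ by a factor at most 2 (none if p is
   constant).  The factor p with the root alpha is (u - alpha) S(u), where S is a
   divided difference of its Taylor polynomial, and T^{p'}_{3/2} keeps S within
   |p'(m)|/6 of p'(m) on the disc; so alpha is the only root there, and comparing
   |z - alpha| > r with |m - 2r - alpha| < 3r on the circle costs a factor at most
   2^(deg p + 1).  Multiplying these bounds over the factors r_i^i gives the
   estimate. *)

Section PowerSums.
Context {F : numFieldType}.
Implicit Types (a : nat -> F) (h rho : F).

Lemma norm_sum_pow_sub_head a n h rho : `|h| <= rho ->
  `|\sum_(i < n.+1) a i * h ^+ i - a 0%N| <= \sum_(1 <= i < n.+1) `|a i| * rho ^+ i.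
Proof.
move=> h_le; rewrite big_ord_recl expr0 mulr1 addrC addKr big_add1 big_mkord /=.
apply: le_trans (ler_norm_sum _ _ _) _; apply: ler_sum => i _.
rewrite normrM normrX ler_wpM2l // lerXn2r ?nnegrE ?(le_trans _ h_le) //.
Qed.

Lemma norm_sum_subrXX_le (w1 w2 : F) rho n : `|w1| <= rho -> `|w2| <= rho ->
  `|\sum_(j < n) w2 ^+ (n.-1 - j) * w1 ^+ j| <= n%:R * rho ^+ n.-1.
Proof.
move=> w1_le w2_le; have rho_ge0 : 0 <= rho by apply: le_trans w1_le.
apply: le_trans (ler_norm_sum _ _ _) _.
have -> : n%:R * rho ^+ n.-1 = \sum_(j < n) rho ^+ (n.-1 - j) * rho ^+ j.
  rewrite (eq_bigr (fun _ => rho ^+ n.-1)) ?sumr_const ?card_ord ?mulr_natl //.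
  by move=> j _; rewrite -exprD subnK //; case: n j => [[]|n] // j; rewrite -ltnS.
apply: ler_sum => j _; rewrite normrM !normrX.
by apply: ler_pM; rewrite ?exprn_ge0 // lerXn2r ?nnegrE.
Qed.

Lemma sum_pow_divided_difference a n (w1 w2 : F) rho : `|w1| <= rho -> `|w2| <= rho ->
  exists2 S, \sum_(i < n.+2) a i * w2 ^+ i - \sum_(i < n.+2) a i * w1 ^+ i
               = (w2 - w1) * S
    & `|S - a 1%N| <= \sum_(1 <= i < n.+1) `|a i.+1| * (i.+1)%:R * rho ^+ i.
Proof.
move=> w1_le w2_le.
exists (\sum_(i < n.+2) a i * \sum_(j < i) w2 ^+ (i.-1 - j) * w1 ^+ j).
  rewrite -sumrB mulr_sumr; apply: eq_bigr => i _.
  by rewrite -mulrBr subrXX mulrCA.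
rewrite 2!big_ord_recl big_ord0 mulr0 add0r big_ord1 /= expr0 !mulr1 addrC addKr.
rewrite big_add1 big_mkord; apply: le_trans (ler_norm_sum _ _ _) _.
apply: ler_sum => i _; rewrite normrM -mulrA ler_wpM2l //.
exact: (norm_sum_subrXX_le _ _ _ i.+2 w1_le w2_le).
Qed.

End PowerSums.

Lemma nderivn_deriv (R : nzRingType) (p : {poly R}) k :
  p^`()^`N(k) = p^`N(k.+1) *+ k.+1.
Proof.
apply/polyP => i; rewrite coefMn !coef_nderivn coef_deriv -!mulrnA addSn.
by rewrite mul_bin_diag mulnC.
Qed.

Lemma ltr_scaled_prod_nat (R : numDomainType) (E1 E2 : nat -> R) (c : R) m n j :
  (m <= j < n)%N -> 0 <= c ->
  (forall i, (m <= i < n)%N -> 0 <= E1 i) ->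
  (forall i, (m <= i < n)%N -> i != j -> E1 i <= E2 i) ->
  (forall i, (m <= i < n)%N -> i != j -> 0 < E2 i) ->
  c * E1 j < E2 j ->
  c * \prod_(m <= i < n) E1 i < \prod_(m <= i < n) E2 i.
Proof.
move=> j_in c_ge0 E1_ge0 E12 E2_gt0 E12j.
have j_iota : j \in index_iota m n by rewrite mem_index_iota.
have uniq_iota : uniq (index_iota m n) by rewrite /index_iota iota_uniq.
rewrite !(bigD1_seq j j_iota uniq_iota) /= mulrA.
have le_rest : \prod_(i <- index_iota m n | i != j) E1 i
               <= \prod_(i <- index_iota m n | i != j) E2 i.
  rewrite big_seq_cond [X in _ <= X]big_seq_cond; apply: ler_prod.
  by move=> i /andP[]; rewrite mem_index_iota => i_in ij; rewrite E1_ge0 ?E12.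
have rest_gt0 : 0 < \prod_(i <- index_iota m n | i != j) E2 i.
  rewrite big_seq_cond; apply: prodr_gt0 => i /andP[].
  by rewrite mem_index_iota; apply: E2_gt0.
have cE1j_ge0 : 0 <= c * E1 j by rewrite mulr_ge0 ?E1_ge0.
by apply: le_lt_trans (ler_wpM2l cE1j_ge0 le_rest) _; rewrite ltr_pM2r.
Qed.

Lemma ltr_weighted_prod_nat (R : numDomainType) (X Y : nat -> R) (d : nat -> nat)
    (x : R) m n j :
  (m <= j < n)%N -> (0 < j)%N -> 0 <= x ->
  (forall i, (m <= i < n)%N -> 0 <= Y i) ->
  (forall i, (m <= i < n)%N -> i != j -> 0 < X i) ->
  (forall i, (m <= i < n)%N -> i != j -> x ^+ d i * Y i <= X i) ->
  x ^+ (d j).+1 * Y j < X j ->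
  x ^+ (j + \sum_(m <= i < n) d i * i) * \prod_(m <= i < n) Y i ^+ i
    < \prod_(m <= i < n) X i ^+ i.
Proof.
move=> j_range j_gt0 x_ge0 Y_ge0 X_gt0 XY XYj.
have xY_ge0 i : (m <= i < n)%N -> 0 <= x ^+ d i * Y i.
  by move=> i_range; rewrite mulr_ge0 ?exprn_ge0 ?Y_ge0.
have Yj_ge0 := Y_ge0 j j_range.
rewrite exprD -prodrXr -mulrA -big_split /=.
apply: ltr_scaled_prod_nat j_range _ _ _ _ _.
- exact: exprn_ge0.
- by move=> i i_range; rewrite exprM -exprMn exprn_ge0 ?xY_ge0.
- move=> i i_range i_ne; rewrite exprM -exprMn lerXn2r ?nnegrE ?xY_ge0 ?XY //.
  exact: ltW (X_gt0 i i_range i_ne).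
- by move=> i i_range i_ne; rewrite exprn_gt0 ?X_gt0.
by rewrite mulrA -exprD -mulSn exprM -exprMn ltrXn2r -?lt0n ?nnegrE ?mulr_ge0 ?exprn_ge0.
Qed.

Lemma size_prod_seq_pred (R : idomainType) (I : eqType) (s : seq I)
    (F : I -> {poly R}) :
  (forall i, i \in s -> F i != 0) ->
  (size (\prod_(i <- s) F i)).-1 = (\sum_(i <- s) (size (F i)).-1)%N.
Proof.
elim: s => [|x s IHs] F_neq0; first by rewrite !big_nil size_poly1.
have Fs_neq0 i : i \in s -> F i != 0.
  by move=> i_s; apply: F_neq0; rewrite in_cons i_s orbT.
have prod_neq0 : \prod_(i <- s) F i != 0.
  by rewrite prodf_seq_neq0; apply/allP => i /Fs_neq0.
have Fx_neq0 := F_neq0 x (mem_head _ _).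
rewrite !big_cons size_mul // -IHs // (polySpred Fx_neq0) (polySpred prod_neq0).
by rewrite addSn addnS.
Qed.

Definition taylor_tail {R : numDomainType} (p : {poly R}) (m rho : R) : R :=
  \sum_(1 <= k < size p) `|p^`N(k).[m]| * rho ^+ k.

Section TaylorTail.
Context {R : numDomainType}.
Implicit Types (p : {poly R}) (m rho : R).

Lemma taylor_tail_eq0 p m rho : (size p <= 1)%N -> taylor_tail p m rho = 0.
Proof. by move=> small; rewrite /taylor_tail big_geq. Qed.

Lemma ler_taylor_tail_scale p m rho c : 1 <= c -> 0 <= rho ->
  c * taylor_tail p m rho <= taylor_tail p m (c * rho).
Proof.
move=> c_ge1 rho_ge0; rewrite /taylor_tail mulr_sumr !big_nat.
apply: ler_sum => k /andP[k_ge1 _]; rewrite mulrCA exprMn.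
apply: ler_wpM2l => //; apply: ler_wpM2r; first exact: exprn_ge0.
by rewrite -{1}[c]expr1 ler_weXn2l.
Qed.

End TaylorTail.

Lemma Tpred_taylor_tail {R : realType} (p : {poly R}) K m rho :
  Tpred p K m rho = (0 < `|p.[m]| - K * taylor_tail p m rho).
Proof.
rewrite /Tpred /taylor_tail; congr (0 < _ - K * _); apply: eq_big_nat => k _.
by rewrite nderivn_def hornerMn -mulr_natr mulfK // pnatr_eq0 -lt0n fact_gt0.
Qed.

Lemma Tpred_neq0 {R : realType} {p : {poly R}} {K m rho : R} : Tpred p K m rho -> p != 0.
Proof.
apply: contraTneq => ->.
by rewrite /Tpred horner0 normr0 size_poly0 big_geq // mulr0 subr0 ltxx.
Qed.

Lemma Tpred_deriv_neq0 {R : realType} {p : {poly R}} {K m rho : R} :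
  Tpred p^`() K m rho -> p != 0.
Proof. by move=> /Tpred_neq0; apply: contraNneq => ->; rewrite deriv0. Qed.

Lemma Tpred_tail_lt {R : realType} {p : {poly R}} {K m r : R} :
  Tpred p K m (8 * r) -> 0 <= K -> 0 <= r -> 4 * K * taylor_tail p m (2 * r) < `|p.[m]|.
Proof.
rewrite Tpred_taylor_tail => Tp K_ge0 r_ge0.
have scale : 4 * taylor_tail p m (2 * r) <= taylor_tail p m (8 * r).
  have -> : 8 * r = 4 * (2 * r) by ring.
  by apply: ler_taylor_tail_scale; lra.
have := ler_wpM2l K_ge0 scale; rewrite mulrCA -mulrA; lra.
Qed.

Local Open Scope complex_scope.
Local Notation "p ^:C" := (map_poly (real_complex _) p) (format "p ^:C").
Local Notation normc := (@Normc.normc _).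

Section Complexification.
Context {R : realType}.
Local Notation C := R[i].
Implicit Types (p : {poly R}) (m rho : R) (u v : C).

Lemma normcE u : `|u| = (normc u)%:C.
Proof. by []. Qed.

Lemma normc_ge0 u : 0 <= normc u.
Proof. by have := normr_ge0 u; rewrite normcE -(rmorph0 (real_complex R)) lecR. Qed.

Lemma normc_real (x : R) : normc x%:C = `|x|.
Proof.
apply: complexI; rewrite -normcE normc_def /= expr0n /= addr0 sqrtr_sqr //.
Qed.

Lemma normcR (x : R) : `|x%:C| = `|x|%:C.
Proof. by rewrite normcE normc_real. Qed.

Lemma normcX u n : normc (u ^+ n) = normc u ^+ n.
Proof. by apply: complexI; rewrite rmorphXn -!normcE normrX. Qed.

Lemma normc_lerB u v : normc u - normc v <= normc (u - v).
Proof. by have := lerB_dist u v; rewrite !normcE -rmorphB lecR. Qed.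

Lemma normc_within u v e : normc (u - v) <= e ->
  normc v - e <= normc u <= normc v + e.
Proof.
have distC : normc (v - u) = normc (u - v).
  by apply: complexI; rewrite -!normcE distrC.
by have := normc_lerB u v; have := normc_lerB v u; rewrite distC => ? ? ?; lra.
Qed.

Lemma polyCi_polyRi (q : {poly int}) : polyCi R q = (polyRi R q)^:C.
Proof.
rewrite /polyCi /polyRi -map_poly_comp; apply: eq_map_poly => z /=.
by rewrite rmorph_int.
Qed.

Lemma size_polyRi (q : {poly int}) : size (polyRi R q) = size q.
Proof. by rewrite size_map_inj_poly //; apply: intr_inj. Qed.

Lemma horner_complex_taylor p m u :
  p^:C.[u] = \sum_(i < size p) (p^`N(i).[m])%:C * (u - m%:C) ^+ i.
Proof.
rewrite -{1}[u](addrNK m%:C) addrC nderiv_taylor; last exact: mulrC.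
rewrite size_map_poly; apply: eq_bigr => i _.
by rewrite nderivn_map horner_map.
Qed.

Lemma normc_horner_sub_center p m rho u : normc (u - m%:C) <= rho ->
  normc (p^:C.[u] - (p.[m])%:C) <= taylor_tail p m rho.
Proof.
move=> u_near; have [->|p_neq0] := eqVneq p 0.
  by rewrite map_poly0 !horner0 subrr Normc.normc0 /taylor_tail size_poly0 big_geq.
rewrite (horner_complex_taylor p m) /taylor_tail (polySpred p_neq0).
have := norm_sum_pow_sub_head (fun i => (p^`N(i).[m])%:C) (size p).-1 (u - m%:C) rho%:C.
rewrite /= nderivn0 !normcE lecR => /(_ u_near).
suff -> : \sum_(1 <= i < (size p).-1.+1) `|(p^`N(i).[m])%:C| * rho%:C ^+ i
        = (\sum_(1 <= k < (size p).-1.+1) `|p^`N(k).[m]| * rho ^+ k)%:C by rewrite lecR.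
by rewrite rmorph_sum; apply: eq_bigr => i _; rewrite normcR rmorphM rmorphXn.
Qed.

Lemma horner_root_divided_difference p m rho (alpha : R) u :
  p != 0 -> root p alpha -> `|alpha - m| <= rho -> normc (u - m%:C) <= rho ->
  exists2 S, p^:C.[u] = (u - alpha%:C) * S
    & normc (S - (p^`().[m])%:C) <= taylor_tail p^`() m rho.
Proof.
move=> p_neq0 p_alpha alpha_near u_near.
have [n size_p] : exists n, size p = n.+2.
  by case: (size p) (root_size_gt1 p_neq0 p_alpha) => [|[|n]] //; exists n.
have alpha_nearC : `|alpha%:C - m%:C| <= rho%:C by rewrite -rmorphB normcR lecR.
have u_nearC : `|u - m%:C| <= rho%:C by rewrite normcE lecR.
have [S eqS le_S] := sum_pow_divided_difference (fun i => (p^`N(i).[m])%:C) n _ _ _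
                       alpha_nearC u_nearC.
exists S.
  have p_alphaC : p^:C.[alpha%:C] = 0 by rewrite horner_map (rootP p_alpha) rmorph0.
  rewrite -[LHS]subr0 -[X in _ - X]p_alphaC !(horner_complex_taylor p m) size_p eqS.
  by congr (_ * _); rewrite opprB addrA subrK.
move: le_S; rewrite /= nderivn1 normcE /taylor_tail polyorder.size_deriv size_p /=.
suff -> : \sum_(1 <= i < n.+1) `|(p^`N(i.+1).[m])%:C| * (i.+1)%:R * rho%:C ^+ i
        = (\sum_(1 <= k < n.+1) `|p^`()^`N(k).[m]| * rho ^+ k)%:C by rewrite lecR.
rewrite rmorph_sum; apply: eq_bigr => i _.
by rewrite nderivn_deriv hornerMn normrMn normcR rmorphM rmorphXn rmorphMn mulr_natr.
Qed.

Lemma rootfree_factor_bounds {p m r z w} : 0 < r -> Tpred p 1 m (8 * r) ->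
  normc (z - m%:C) <= 2 * r -> normc (w - m%:C) <= 2 * r ->
  0 < normc p^:C.[z] /\ 2^-1 ^+ (size p).-1 * normc p^:C.[w] <= normc p^:C.[z].
Proof.
move=> r_gt0 Tp z_near w_near.
have tail_lt : 4 * 1 * taylor_tail p m (2 * r) < `|p.[m]|.
  by apply: (Tpred_tail_lt Tp); lra.
have /normc_within := normc_horner_sub_center p m _ _ z_near.
have /normc_within := normc_horner_sub_center p m _ _ w_near.
rewrite !normc_real; set E := taylor_tail p m (2 * r) in tail_lt *.
move=> /andP[_ w_hi] /andP[z_lo _]; have pm_ge0 := normr_ge0 p.[m].
split; first lra.
have w_ge0 := normc_ge0 p^:C.[w].
have [size_le1|size_gt1] := leqP (size p) 1.
  have E0 : E = 0 by apply: taylor_tail_eq0.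
  have -> : (size p).-1 = 0%N by case: (size p) size_le1 => [|[]].
  by rewrite expr0 mul1r; lra.
have half_pow : 2^-1 ^+ (size p).-1 <= 2^-1 :> R.
  rewrite -[X in _ <= X]expr1 ler_wiXn2l //; [lra | lra |].
  by case: (size p) size_gt1 => [|[]].
by apply: le_trans (ler_wpM2r w_ge0 half_pow) _; lra.
Qed.

Lemma simple_root_unique_in_disc {p m r} {alpha : R} z :
  0 < r -> `|alpha - m| < r -> root p alpha -> Tpred p^`() (3 / 2) m (8 * r) ->
  normc (z - m%:C) <= 2 * r -> root p^:C z -> z = alpha%:C.
Proof.
move=> r_gt0 alpha_near p_alpha Tp z_near /rootP.
have tail_lt : 4 * (3 / 2) * taylor_tail p^`() m (2 * r) < `|p^`().[m]|.
  by apply: (Tpred_tail_lt Tp); lra.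
have alpha_le : `|alpha - m| <= 2 * r by lra.
have [S -> /normc_within] := horner_root_divided_difference p m (2 * r) alpha z
                               (Tpred_deriv_neq0 Tp) p_alpha alpha_le z_near.
rewrite normc_real => /andP[S_lo _]; have a1_ge0 := normr_ge0 p^`().[m].
have S_neq0 : S != 0.
  by apply: contraTneq S_lo => ->; rewrite Normc.normc0 -ltNge; lra.
by move/eqP; rewrite mulf_eq0 (negbTE S_neq0) orbF subr_eq0 => /eqP.
Qed.

Lemma simple_root_circle_bound {p m r} {alpha : R} z :
  0 < r -> `|alpha - m| < r -> root p alpha -> Tpred p^`() (3 / 2) m (8 * r) ->
  normc (z - m%:C) = 2 * r ->
  2^-1 ^+ size p * normc p^:C.[(m - 2 * r)%:C] < normc p^:C.[z].
Proof.
move=> r_gt0 alpha_near p_alpha Tp z_circle; have p_neq0 := Tpred_deriv_neq0 Tp.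
have tail_lt : 4 * (3 / 2) * taylor_tail p^`() m (2 * r) < `|p^`().[m]|.
  by apply: (Tpred_tail_lt Tp); lra.
set a1 := p^`().[m] in tail_lt *; set E := taylor_tail p^`() m (2 * r) in tail_lt.
have alpha_le : `|alpha - m| <= 2 * r by lra.
have cofactor u : normc (u - m%:C) <= 2 * r ->
    exists2 S, p^:C.[u] = (u - alpha%:C) * S & `|a1| - E <= normc S <= `|a1| + E.
  move=> u_near; have [S eqS /normc_within] :=
    horner_root_divided_difference p m (2 * r) alpha u p_neq0 p_alpha alpha_le u_near.
  by rewrite normc_real; exists S.
have w_near : normc ((m - 2 * r)%:C - m%:C) <= 2 * r.
  rewrite -rmorphB normc_real (_ : m - 2 * r - m = - (2 * r)); last by ring.
  by rewrite normrN ger0_norm //; lra.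
have z_near : normc (z - m%:C) <= 2 * r by rewrite z_circle.
have [Sz -> /andP[Sz_lo _]] := cofactor z z_near.
have [Sw -> /andP[_ Sw_hi]] := cofactor _ w_near.
have z_far : r < normc (z - alpha%:C).
  have := normc_lerB (z - m%:C) (alpha%:C - m%:C).
  by rewrite opprB addrA subrK -rmorphB normc_real z_circle; lra.
have w_close : normc ((m - 2 * r)%:C - alpha%:C) < 3 * r.
  by rewrite -rmorphB normc_real ltr0_norm; move: alpha_near; rewrite ltr_norml; lra.
have w_ge0 := normc_ge0 ((m - 2 * r)%:C - alpha%:C).
have Sw_ge0 := normc_ge0 Sw; have a1_ge0 := normr_ge0 a1.
rewrite !Normc.normcM; have size_p := root_size_gt1 p_neq0 p_alpha.
(* As |z - alpha| > r, |w - alpha| < 3r and the cofactors lie within |a1|/6 of |a1|,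
   the ratio |p(w)| / |p(z)| is below 3 (7/6) / (5/6) = 21/5; this is absorbed by
   2^(size p) only from size 3 on.  A linear factor has a constant cofactor. *)
have [size_p2|size_p3] := eqVneq (size p) 2.
  have E0 : E = 0 by apply: taylor_tail_eq0; rewrite polyorder.size_deriv size_p2.
  by rewrite size_p2; nra.
have eighth_pow : 2^-1 ^+ size p <= 8^-1 :> R.
  have -> : 8^-1 = 2^-1 ^+ 3 :> R by rewrite !exprS expr0; field.
  rewrite ler_wiXn2l //; [lra | lra |].
  by rewrite ltn_neqAle eq_sym size_p3 size_p.
apply: le_lt_trans (ler_wpM2r (mulr_ge0 w_ge0 Sw_ge0) eighth_pow) _; nra.
Qed.

Section FactoredPolynomial.
Context {ps : nat -> {poly R}} {n i0 : nat} {m r alpha : R}.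
Hypotheses (i0_range : (1 <= i0 < n)%N) (r_gt0 : 0 < r) (alpha_near : `|alpha - m| < r).
Hypotheses (root_i0 : root (ps i0) alpha) (T_i0 : Tpred (ps i0)^`() (3 / 2) m (8 * r)).
Hypothesis T_other :
  forall i, (1 <= i < n)%N -> i != i0 -> Tpred (ps i) 1 m (8 * r).
Local Notation Q := (\prod_(1 <= i < n) ps i ^+ i).

Lemma horner_prod_expC u : Q^:C.[u] = \prod_(1 <= i < n) (ps i)^:C.[u] ^+ i.
Proof.
by rewrite rmorph_prod horner_prod; apply: eq_bigr => i _; rewrite rmorphXn horner_exp.
Qed.

Lemma normc_horner_prod_expC u :
  normc Q^:C.[u] = \prod_(1 <= i < n) normc (ps i)^:C.[u] ^+ i.
Proof.
rewrite horner_prod_expC (big_morph _ (@Normc.normcM R) (@Normc.normc1 R)).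
by apply: eq_bigr => i _; apply: normcX.
Qed.

Lemma prod_exp_root_in_disc {z} :
  normc (z - m%:C) <= 2 * r -> root Q^:C z -> z = alpha%:C.
Proof.
move=> z_near /rootP; rewrite horner_prod_expC => /eqP; rewrite prodf_seq_eq0.
case/hasP => i; rewrite mem_index_iota => i_range /=.
rewrite expf_eq0 => /andP[_ /eqP root_i].
have [i_eq | i_ne] := eqVneq i i0.
  have root_z : root (ps i0)^:C z by apply/rootP; rewrite -i_eq.
  exact: simple_root_unique_in_disc r_gt0 alpha_near root_i0 T_i0 z_near root_z.
have [] := rootfree_factor_bounds r_gt0 (T_other i i_range i_ne) z_near z_near.
by rewrite root_i Normc.normc0 ltxx.
Qed.

Lemma prod_exp_circle_bound {z} : normc (z - m%:C) = 2 * r ->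
  2^-1 ^+ (i0 + \sum_(1 <= i < n) (size (ps i)).-1 * i) * normc Q^:C.[(m - 2 * r)%:C]
    < normc Q^:C.[z].
Proof.
move=> z_circle; set w := (m - 2 * r)%:C.
have w_near : normc (w - m%:C) <= 2 * r.
  rewrite -rmorphB normc_real (_ : m - 2 * r - m = - (2 * r)); last by ring.
  by rewrite normrN ger0_norm // mulr_ge0 ?ler0n ?ltW.
have z_near : normc (z - m%:C) <= 2 * r by rewrite z_circle.
have size_i0 : (0 < size (ps i0))%N.
  by rewrite size_poly_gt0 (Tpred_deriv_neq0 T_i0).
have other i : (1 <= i < n)%N -> i != i0 ->
    0 < normc (ps i)^:C.[z] /\
    2^-1 ^+ (size (ps i)).-1 * normc (ps i)^:C.[w] <= normc (ps i)^:C.[z].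
  move=> i_range i_ne.
  exact: rootfree_factor_bounds r_gt0 (T_other i i_range i_ne) z_near w_near.
rewrite !normc_horner_prod_expC.
apply: ltr_weighted_prod_nat i0_range _ _ _ _ _ _.
- by case/andP: i0_range.
- lra.
- by move=> i _; apply: normc_ge0.
- by move=> i i_range /(other i i_range) [].
- by move=> i i_range /(other i i_range) [].
rewrite prednK //.
exact: simple_root_circle_bound r_gt0 alpha_near root_i0 T_i0 z_circle.
Qed.

End FactoredPolynomial.

End Complexification.

Theorem lemma1 (R : realType) (P : {poly int}) (r : nat -> {poly int})
  (i0 : nat) (a b alpha : R) :
  P != 0 ->
  P = \prod_(1 <= i < size P) r i ^+ i ->
  (forall i, (1 <= i < size P)%N -> zsquarefree (r i)) ->
  (forall i j, (1 <= i < size P)%N -> (1 <= j < size P)%N -> i != j ->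
     zcoprime (r i) (r j)) ->
  (1 <= i0 < size P)%N ->
  a < alpha < b ->
  root (polyRi R (r i0)) alpha ->
  let mI := (a + b) / 2 in
  let rI := (b - a) / 2 in
  Tpred (polyRi R (r i0))^`() (3 / 2) mI (8 * rI) ->
  (forall i, (1 <= i < size P)%N -> i != i0 -> Tpred (polyRi R (r i)) 1 mI (8 * rI)) ->
  (`|alpha%:C - mI%:C| < (2 * rI)%:C /\
   forall z : R[i], root (polyCi R P) z -> `|z - mI%:C| < (2 * rI)%:C -> z = alpha%:C) /\
  (forall z : R[i], `|z - mI%:C| = (2 * rI)%:C ->
     `|(polyCi R P).[z]| >
       (2%:R ^- (i0 + (size P).-1)) * `|(polyCi R P).[(mI - 2 * rI)%:C]|).
Proof.
move=> P_neq0 P_fact _ _ i0_range /andP[a_lt lt_b] root_i0 mI rI T_i0 T_other.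
have rI_gt0 : 0 < rI by rewrite /rI; lra.
have alpha_near : `|alpha - mI| < rI by rewrite ltr_norml /mI /rI; apply/andP; split; lra.
set s := size P in P_fact i0_range T_other *.
have r_neq0 i : (1 <= i < s)%N -> r i != 0.
  move=> i_range; move: P_neq0; rewrite P_fact prodf_seq_neq0 => /allP/(_ i).
  by rewrite mem_index_iota i_range expf_eq0 => /(_ isT); case/andP: i_range => ->.
have polyCiP : polyCi R P = (\prod_(1 <= i < s) polyRi R (r i) ^+ i)^:C.
  rewrite polyCi_polyRi {1}P_fact /polyRi rmorph_prod; congr map_poly.
  by apply: eq_bigr => i _; rewrite rmorphXn.
have deg_P : s.-1 = (\sum_(1 <= i < s) (size (polyRi R (r i))).-1 * i)%N.
  rewrite /s {1}P_fact size_prod_seq_pred => [|i]; last first.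
    by rewrite mem_index_iota => i_range; rewrite expf_neq0 ?r_neq0.
  by apply: eq_bigr => i _; rewrite size_exp size_polyRi.
split; first split.
- by rewrite -rmorphB normcR ltcR; lra.
- move=> z; rewrite polyCiP normcE ltcR => root_z /ltW z_near.
  exact: (prod_exp_root_in_disc (ps := fun i => polyRi R (r i))
            rI_gt0 alpha_near root_i0 T_i0 T_other z_near root_z).
move=> z; rewrite normcE => /complexI z_circle.
have := prod_exp_circle_bound (ps := fun i => polyRi R (r i))
          i0_range rI_gt0 alpha_near root_i0 T_i0 T_other z_circle.
rewrite -polyCiP -deg_P !normcE => bound.
have -> : 2%:R ^- (i0 + s.-1) = ((2^-1 : R) ^+ (i0 + s.-1))%:C.
  by rewrite rmorphXn rmorphV ?unitfE ?pnatr_eq0 // rmorph_nat exprVn.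
by rewrite -rmorphM ltcR.
Qed.
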